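(* Let $(X_1,X_2)$ be an extensible pair and let $\gamma\in\mathcal H_2$ with $|\gamma|_{(X_1,X_2)}=0$; put $l=\mathrm{ls}(\gamma)$, $r=\mathrm{rs}(\gamma)$. Then there exist integers $b_i$ ($1\le i\le l-1$), $c_i$ ($1\le i\le r-1$) and $s$ such that for all $k\ge l+r-d_1-d_2$, $$\gamma^{(k)}=\sum_{p\in Z_k,\ i(p)\le l-1}b_{i(p)}\alpha_p+\sum_{p\in Z_k,\ i(p)\ge l,\ \bar\imath(p)\ge r}s\,\alpha_p+\sum_{p\in Z_k,\ \bar\imath(p)\le r-1}c_{\bar\imath(p)}\alpha_p.$$
   Context: Marked Dynkin diagram $(X,\xi)$: Dynkin diagram of a symmetrizable generalized Cartan matrix $C(X)$ with distinguished node $\xi$; $\det X=\det C(X)$; $X(-1)$ is $X$ minus $\xi$ ($\det\emptyset=1$); $\Delta_X=\det X-\det X(-1)$. $(X_1,X_2)$ is an extensible pair if $\det X_i\ne0$, $\Delta_i:=\Delta_{X_i}\ne0$, $\gcd(\det X_i,\Delta_i)=1$ ($i=1,2$), $\gcd(\Delta_1,\Delta_2)=1$. $Z_k$ is obtained from the disjoint union of $X_1$, a path $A_k$ (nodes $1,\dots,k$) and $X_2$ by adding simple edges $\xi_1$—$1$ and $k$—$\xi_2$; $\omega_p,\alpha_p$ are fundamental weights and simple roots of $\mathfrak g(Z_k)$. Numberings: if $X$ has $d$ nodes, a numbering is a bijection $\epsilon:N(X)\to\{1,\dots,d\}$ with $\epsilon(\xi)=d$. $X(m)$ ($m\ge0$)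 is $X$ with a path of $m$ new nodes $\xi-1-\cdots-m$ attached at $\xi$, numbered by $j(p)=\epsilon(p)$ on $X$ and $j=d+t$ on the $t$-th new node; $\bar\omega^{(m)}$ is the fundamental weight of $\mathfrak g(X(m))$ at the node with $j=d+m$. For extensible $X$ ($\det X\ne0$, $\Delta_X\ne0$, $\gcd(\det X,\Delta_X)=1$) there is (by earlier work of Kleber and the author) a unique integer sequence $(a_i)_{i\ge1}$ with $-\Delta_X\omega_p-a_{j(p)}\bar\omega^{(m)}\in Q(X(m))$ for all $m\ge0$ with $\det X(m)\ne0$ and all $p\in X(m)$. Fix numberings $\epsilon_1,\epsilon_2$ of $X_1,X_2$ ($d_i$ nodes) with sequences $(a_i^{(1)}),(a_i^{(2)})$. On $Z_k$: $i(p)=\epsilon_1(p)$ on $X_1$, $i=d_1+t$ on the $t$-th node of $A_k$, $i(p)=d_1+d_2+k+1-\epsilon_2(p)$ on $X_2$; $\bar\imath(p)=\epsilon_2(p)$ on $X_2$, $\bar\imath=d_2+k+1-t$ on the $t$-th node of $A_k$, $\bar\imath(p)=d_1+d_2+k+1-\epsilon_1(p)$ on $X_1$. $\mathcal H_1$: finitely supported integer sequences $x=(x_1,x_2,\dots)$, $\ell(x)=\max\{i:x_i\ne0\}$; $\mathcal H_2=\mathcal H_1\times\mathcal H_1$. For $\gamma=(x,y)$: $\mathrm{ls}(\gamma)=\max(\ell(x),d_1)$, $\mathrm{rs}(\gamma)=\max(\ell(y),d_2)$, $\ell(\gamma)=\mathrm{ls}+\mathrm{rs}$, and for $k\ge\ell(\gamma)-d_1-d_2$,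 $\gamma^{(k)}=\sum_{p\in Z_k}(x_{i(p)}+y_{\bar\imath(p)})\omega_p$. Number of boxes: $|\gamma|_{(X_1,X_2)}=\Delta_2\sum_ix_ia_i^{(1)}-\Delta_1\sum_iy_ia_i^{(2)}$. *)

(* Integer matrices are given as functions nat -> nat -> int
   (0-based indices); a marked diagram with d nodes is given in the order of a
   numbering epsilon, so node with epsilon-number j is index j-1 and the
   distinguished node xi is index d-1. *)
From mathcomp Require Import all_boot all_order all_algebra.
Set Implicit Arguments. Unset Strict Implicit. Unset Printing Implicit Defensive.
Import Order.TTheory GRing.Theory Num.Theory.
Local Open Scope ring_scope.

Definition sqmx (n : nat) (A : nat -> nat -> int) : 'M[int]_n :=
  \matrix_(i < n, j < n) A i j.

Definition is_GCM (d : nat) (C : nat -> nat -> int) : Prop :=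
  (forall i, (i < d)%N -> C i i = 2) /\
  (forall i j, (i < d)%N -> (j < d)%N -> i <> j -> C i j <= 0) /\
  (forall i j, (i < d)%N -> (j < d)%N -> (C i j = 0 <-> C j i = 0)).

Definition symmetrizable (d : nat) (C : nat -> nat -> int) : Prop :=
  exists eps : nat -> int, (forall i, (i < d)%N -> 0 < eps i) /\
    (forall i j, (i < d)%N -> (j < d)%N -> eps i * C i j = eps j * C j i).

Definition detX (d : nat) (C : nat -> nat -> int) : int := \det (sqmx d C).
(* det X(-1): X with the distinguished node (index d-1) removed; det of empty = 1 *)
Definition detXm1 (d : nat) (C : nat -> nat -> int) : int := \det (sqmx d.-1 C).
Definition DeltaX (d : nat) (C : nat -> nat -> int) : int := detX d C - detXm1 d C.

Definition extensible (d : nat) (C : nat -> nat -> int) : Prop :=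
  detX d C != 0 /\ DeltaX d C != 0 /\ gcdz (detX d C) (DeltaX d C) = 1.

(* Cartan matrix of X(m): path xi - 1 - ... - m attached at xi (index d-1);
   the t-th new node has index d+t-1. *)
Definition extmx (d m : nat) (C : nat -> nat -> int) : nat -> nat -> int :=
  fun u v =>
    if (u < d)%N && (v < d)%N then C u v
    else if u == v then 2
    else if ((v == u.+1) && (d <= v)%N) || ((u == v.+1) && (d <= u)%N) then -1
    else 0.

(* Weights of g(Y) (Y with n nodes, Cartan matrix A) are integer vectors of
   coordinates in the fundamental weights; alpha_p = sum_q A q p omega_q
   (Kac convention a_{qp} = <alpha_p, h_q>). *)
Definition inQ (n : nat) (A : nat -> nat -> int) (w : nat -> int) : Prop :=
  exists c : nat -> int, forall q, (q < n)%N -> w q = \sum_(p < n) A q p * c p.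

(* (a_i)_{i>=1} is the sequence attached to (X, epsilon):
   -Delta_X omega_p - a_{j(p)} omegabar^(m) in Q(X(m)) whenever det X(m) != 0 *)
Definition is_ext_seq (d : nat) (C : nat -> nat -> int) (a : nat -> int) : Prop :=
  forall m : nat, detX (d + m) (extmx d m C) != 0 ->
    forall j, (j < d + m)%N ->
      inQ (d + m) (extmx d m C)
        (fun q => - DeltaX d C * (q == j)%:R - a j.+1 * (q == (d + m).-1)%:R).

(* Cartan matrix of Z_k, nodes indexed by i(p)-1 (0-based), N = d1+k+d2.
   X1 occupies 0..d1-1 (in epsilon1 order), A_k occupies d1..d1+k-1,
   X2 occupies d1+k..N-1 with node of epsilon2-number e at index N-e.
   Simple edges join consecutive indices u, u+1 for d1-1 <= u <= d1+k-1
   (for k = 0 this is the single edge xi1 - xi2). *)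
Definition Zmx (d1 d2 k : nat) (C1 C2 : nat -> nat -> int) : nat -> nat -> int :=
  fun u v =>
    let N := (d1 + k + d2)%N in
    if (u < d1)%N && (v < d1)%N then C1 u v
    else if (d1 + k <= u)%N && (d1 + k <= v)%N then C2 (N - u).-1 (N - v).-1
    else if u == v then 2
    else if ((v == u.+1) && (d1 <= v <= d1 + k)%N)
         || ((u == v.+1) && (d1 <= u <= d1 + k)%N) then -1
    else 0.

(* H_1: finitely supported integer sequences, represented by a list;
   x_i = nth 0 x (i-1) for i >= 1 *)
Definition xco (x : seq int) (i : nat) : int :=
  if i is i'.+1 then nth 0 x i' else 0.
(* l(x) = max { i : x_i <> 0 } (0 for the zero sequence) *)
Definition ellx (x : seq int) : nat :=
  \max_(i < size x | nth 0 x i != 0) i.+1.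

Definition lsg (d1 : nat) (x : seq int) : nat := maxn (ellx x) d1.
Definition rsg (d2 : nat) (y : seq int) : nat := maxn (ellx y) d2.

(* gamma^(k): coefficient of omega at 0-based index u is x_{i} + y_{ibar}
   with i = u+1, ibar = N+1-i = N-u *)
Definition gammak (d1 d2 k : nat) (x y : seq int) : nat -> int :=
  fun u => xco x u.+1 + xco y (d1 + k + d2 - u)%N.

Definition boxes (Delta1 Delta2 : int) (a1 a2 : nat -> int) (x y : seq int) : int :=
  Delta2 * \sum_(i < size x) nth 0 x i * a1 i.+1
  - Delta1 * \sum_(i < size y) nth 0 y i * a2 i.+1.

(* Zero boxes and gcd(Delta_1, Delta_2) = 1 give Sum x_i a_i^(1) = Delta_1 t and
   Sum y_i a_i^(2) = Delta_2 t for one integer t.  On each side, the defining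
   property of (a_i) puts -Delta (x + t omegabar) in the root lattice of X(m);
   as det X(m) = det X + m Delta is prime to Delta, so is x + t omegabar, with
   integer root coordinates b.  Cramer's rule shows that
   det X(m) (t - b_last) does not depend on m; since det X(m) grows linearly,
   b_last = t, and the recurrence 2 b_q = b_(q-1) + b_(q+1) along the chain then
   makes b constant equal to t from node l-1 on.  Gluing the coordinates of the
   two sides along this constant over A_k gives the coordinates of gamma^(k). *)

From mathcomp Require Import all_boot all_order all_algebra zify ring.
Set Implicit Arguments.
Unset Strict Implicit.
Unset Printing Implicit Defensive.
Import Order.TTheory GRing.Theory Num.Theory.
Local Open Scope ring_scope.

Ltac case_ifs := repeat (case: ifP => ?).

Lemma big_ord_interval (R : nmodType) n lo hi (F : nat -> R) :
  (lo <= hi <= n)%N ->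
  (forall p, (p < n)%N -> ~~ (lo <= p < hi)%N -> F p = 0) ->
  \sum_(p < n) F p = \sum_(lo <= p < hi) F p.
Proof.
move=> /andP[lo_hi hi_n] F0; have lo_n := leq_trans lo_hi hi_n.
have F0_out a b : (b <= lo)%N || (hi <= a)%N -> (b <= n)%N -> \sum_(a <= p < b) F p = 0.
  move=> ab bn; rewrite big1_seq // => p; rewrite mem_index_iota => /andP[_ ?].
  by apply: F0; lia.
rewrite -(big_mkord xpredT) (big_cat_nat (leq0n lo) lo_n) (big_cat_nat lo_hi hi_n) /=.
by rewrite (F0_out 0%N lo) ?(F0_out hi n) ?leqnn ?orbT ?lo_n // add0r addr0.
Qed.

Lemma sum_ord_delta (R : pzSemiRingType) n (F : nat -> R) q : (q < n)%N ->
  \sum_(j < n) F j * (q == j)%:R = F q.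
Proof.
move=> lt_qn; transitivity (\sum_(j < n | j == q :> nat) F j); last by rewrite big_ord1_eq lt_qn.
by rewrite [RHS]big_mkcond; apply: eq_bigr => j _; rewrite eq_sym; case: eqP; rewrite ?mulr1 ?mulr0.
Qed.

Lemma sqmx_cramer n (A : nat -> nat -> int) (c w : nat -> int) :
  (forall q, (q < n)%N -> w q = \sum_(p < n) A q p * c p) ->
  forall i : 'I_n, \det (sqmx n A) * c i = \sum_(j < n) \adj (sqmx n A) i j * w j.
Proof.
move=> Hw i.
have Ac : sqmx n A *m (\col_(p < n) c p) = \col_(q < n) w q.
  by apply/matrixP => q k; rewrite !mxE Hw //; apply: eq_bigr => p _; rewrite !mxE.
have := congr1 (fun M => (\adj (sqmx n A) *m M) i ord0) Ac.
rewrite mulmxA mul_adj_mx mul_scalar_mx !mxE => ->.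
by apply: eq_bigr => j _; rewrite !mxE.
Qed.

Lemma sqmx_lead_minor n (A : nat -> nat -> int) :
  row' ord_max (col' ord_max (sqmx n.+1 A)) = sqmx n A.
Proof. by apply/matrixP => i j; rewrite !mxE !lift_max. Qed.

Lemma sign_addnn n : (-1) ^+ (n + n) = 1 :> int.
Proof. by rewrite -signr_odd addnn odd_double. Qed.

Lemma adj_sqmx_max n (A : nat -> nat -> int) :
  \adj (sqmx n.+1 A) ord_max ord_max = \det (sqmx n A).
Proof. by rewrite mxE /cofactor sign_addnn mul1r sqmx_lead_minor. Qed.

Lemma bump_lt h i : (i < h)%N -> bump h i = i.
Proof. by move=> lt_ih; rewrite /bump leqNgt lt_ih. Qed.

Lemma bump_ge h i : (h <= i)%N -> bump h i = i.+1.
Proof. by rewrite /bump => ->. Qed.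

Lemma det_sqmx_chain_step n (A : nat -> nat -> int) :
  A n.+1 n.+1 = 2 -> A n.+1 n = -1 -> A n n.+1 = -1 ->
  (forall j, (j < n)%N -> A n.+1 j = 0) -> (forall i, (i < n)%N -> A i n.+1 = 0) ->
  \det (sqmx n.+2 A) = 2 * \det (sqmx n.+1 A) - \det (sqmx n A).
Proof.
move=> A22 A21 A12 A2j Ai2.
have ltnS_ord (i : 'I_n) : (i < n.+1)%N := ltnW (ltn_ord i).
rewrite (expand_det_row _ ord_max) !big_ord_recr /= big1 => [|j _]; last first.
  by rewrite mxE /= A2j ?mul0r.
rewrite add0r {2}/cofactor sqmx_lead_minor sign_addnn mul1r /cofactor.
set B := row' _ _.
rewrite (expand_det_col B ord_max) big_ord_recr /= big1 => [|i _]; last first.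
  by rewrite !mxE /= bump_lt ?bump_ge ?Ai2 ?mul0r.
rewrite /cofactor sign_addnn mul1r.
have -> : row' ord_max (col' ord_max B) = sqmx n A.
  by apply/matrixP => i k; rewrite !mxE /= !bump_lt.
rewrite !mxE /= bump_lt ?bump_ge // A22 A21 A12.
by rewrite addSn exprS sign_addnn; ring.
Qed.

Lemma coprimez_addMr (m n : int) (M : nat) :
  coprimez m n -> coprimez n (m + M%:Z * n).
Proof. by rewrite /coprimez addrC gcdzMDl gcdzC. Qed.

Lemma coprimez_cross (a b u v : int) :
  coprimez a b -> a != 0 -> b * u = a * v -> exists t, u = a * t /\ v = b * t.
Proof.
move=> co_ab a0 buav.
have /dvdzP[t u_ta] : (a %| u)%Z by rewrite -(Gauss_dvdzr _ co_ab) buav dvdz_mulr.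
exists t; split; first by rewrite u_ta mulrC.
by apply: (mulfI a0); rewrite -buav u_ta; ring.
Qed.

Lemma lin_mul_small_eq0 (D Delta e K : int) (M : nat) :
  Delta != 0 -> (`|D| + `|K| < M)%N -> (D + M%:Z * Delta) * e = K -> e = 0.
Proof.
move=> Delta0 small eqK; have small_Z : `|D| + `|K| < M%:Z by lia.
have [Delta_pos|Delta_neg] : 1 <= Delta \/ Delta <= -1 by lia.
all: have [e_pos|[e_neg|//]] : 1 <= e \/ e <= -1 \/ e = 0 by lia.
all: have : M%:Z <= M%:Z * Delta \/ M%:Z <= - (M%:Z * Delta) by nia.
all: nia.
Qed.

Lemma second_diff_const (u : nat -> int) lo hi t : (0 < lo)%N ->
  (forall q, (lo <= q <= hi)%N -> u q.-1 + u q.+1 = 2 * u q) ->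
  u hi = t -> u hi.+1 = t -> forall p, (lo.-1 <= p <= hi.+1)%N -> u p = t.
Proof.
move=> lo_gt0 rec u_hi u_hi1.
have down i : (i <= hi.+1 - lo)%N -> u (hi - i)%N = t /\ u (hi.+1 - i)%N = t.
  elim: i => [|i IHi] le_i; first by rewrite !subn0.
  have [IH1 IH2] := IHi (ltnW le_i); split; last by rewrite subSS.
  have := rec (hi - i)%N ltac:(lia); rewrite IH1 -subSn ?IH2; last by lia.
  by rewrite (_ : (hi - i).-1 = hi - i.+1)%N; [lia | lia].
move=> p range_p; have [->|lt_p] : p = hi.+1 \/ (p <= hi)%N by lia.
  exact: u_hi1.
by have [+ _] := down (hi - p)%N ltac:(lia); rewrite subKn.
Qed.

Lemma eq_inQ n A (w w' : nat -> int) :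
  (forall q, (q < n)%N -> w q = w' q) -> inQ n A w -> inQ n A w'.
Proof. by move=> ww' [c Hc]; exists c => q lt_qn; rewrite -ww' ?Hc. Qed.

Lemma inQ_sum n A k (c : nat -> int) (w : nat -> nat -> int) :
  (forall j, (j < k)%N -> inQ n A (w j)) ->
  inQ n A (fun q => \sum_(j < k) c j * w j q).
Proof.
elim: k => [|k IHk] Qw.
  by exists (fun=> 0) => q _; rewrite big_ord0 big1 // => p _; rewrite mulr0.
have [g Hg] := IHk (fun j lt_jk => Qw j (ltnW lt_jk)).
have [h Hh] := Qw k (ltnSn k).
exists (fun p => g p + c k * h p) => q lt_qn.
rewrite big_ord_recr /= Hg // Hh // mulr_sumr -big_split /=.
by apply: eq_bigr => p _; rewrite mulrDr mulrCA.
Qed.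

Lemma inQ_coprime n A (D : int) (w : nat -> int) :
  D != 0 -> coprimez D (\det (sqmx n A)) ->
  inQ n A (fun q => D * w q) -> inQ n A w.
Proof.
move=> D0 coD [c Hc].
have D_dvd_c (i : 'I_n) : (D %| c i)%Z.
  have := sqmx_cramer Hc i; under eq_bigr => j _ do rewrite mulrCA.
  rewrite -mulr_sumr => det_c.
  by rewrite -(Gauss_dvdzr _ coD) det_c dvdz_mulr.
exists (fun p => (c p %/ D)%Z) => q lt_qn.
apply: (mulfI D0); rewrite Hc // mulr_sumr; apply: eq_bigr => p _.
by rewrite mulrCA [D * _]mulrC divzK ?D_dvd_c.
Qed.

Lemma ellx_size x : (ellx x <= size x)%N.
Proof. by apply/bigmax_leqP => i _; exact: ltn_ord. Qed.

Lemma xco_ellx x i : (ellx x <= i)%N -> xco x i.+1 = 0.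
Proof.
move=> le_xi /=; case: (ltnP i (size x)) => [lt_ix|]; last exact: nth_default.
apply/eqP; apply: contraLR le_xi; rewrite -ltnNge => nz.
exact: (@leq_bigmax_cond _ (fun j : 'I_(size x) => nth 0 x j != 0) (fun j => j.+1) (Ordinal lt_ix)).
Qed.

Lemma sum_xco x n (F : nat -> int) : (ellx x <= n)%N ->
  \sum_(i < n) xco x i.+1 * F i = \sum_(i < size x) nth 0 x i * F i.
Proof.
move=> le_xn; have le_xs := ellx_size x.
have F0 i : ~~ (0 <= i < ellx x)%N -> xco x i.+1 * F i = 0.
  by move=> ge_i; rewrite xco_ellx ?mul0r //; lia.
rewrite (@big_ord_interval _ _ 0 (ellx x) (fun i => xco x i.+1 * F i)) ?le_xn //;
  last by move=> p _ /F0.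
by rewrite (@big_ord_interval _ _ 0 (ellx x) (fun i => xco x i.+1 * F i)) ?le_xs //;
  move=> p _ /F0.
Qed.

(* [extmx d m C] does not depend on [m]: [extmx d 0 C] is the Cartan matrix of
   the infinite chain X(oo), and its leading n x n block is that of X(n - d). *)
Lemma extmx_chain d C q p : ((d <= q) || (d <= p))%N ->
  extmx d 0 C q p = if p == q then 2 else if (p == q.+1) || (q == p.+1) then -1 else 0.
Proof. by rewrite /extmx; case_ifs; lia. Qed.

Lemma sum_extmx_chain_row d C n q (f : nat -> int) :
  (d <= q)%N -> (0 < q)%N -> (q < n)%N ->
  \sum_(p < n) extmx d 0 C q p * f p =
  2 * f q - f q.-1 - (if (q.+1 < n)%N then f q.+1 else 0).
Proof.
case: q => [//|q] le_dq _ lt_qn.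
set F := fun p => extmx d 0 C q.+1 p * f p.
rewrite (@big_ord_interval _ _ q (minn n q.+3) F); last 2 first.
- by apply/andP; split; lia.
- by move=> p lt_pn; rewrite /F extmx_chain ?le_dq //; case_ifs; rewrite ?mul0r //; lia.
have [lt_q2n|le_nq2] := ltnP q.+2 n.
  rewrite (_ : minn n q.+3 = q.+3); last by lia.
  do 3 (rewrite big_ltn; last by lia).
  by rewrite big_geq // /F !extmx_chain ?le_dq ?orbT //=; case_ifs; lia.
rewrite (_ : minn n q.+3 = q.+2); last by lia.
do 2 (rewrite big_ltn; last by lia).
by rewrite big_geq // /F !extmx_chain ?le_dq ?orbT //=; case_ifs; lia.
Qed.

Lemma sum_extmx_row_trunc d C q n (f : nat -> int) : (d <= n)%N -> (q.+1 < n)%N ->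
  \sum_(p < n) extmx d 0 C q p * f p = \sum_(0 <= p < maxn d q.+2) extmx d 0 C q p * f p.
Proof.
move=> le_dn lt_q1n; apply: (big_ord_interval (F := fun p => extmx d 0 C q p * f p)).
  by rewrite geq_max le_dn.
move=> p _ /negbTE out_p; rewrite extmx_chain; last by lia.
by case_ifs; rewrite ?mul0r //; lia.
Qed.

Lemma det_extmx d C m : (0 < d)%N ->
  \det (sqmx (d + m) (extmx d 0 C)) = detX d C + m%:Z * DeltaX d C.
Proof.
case: d => [//|d] _; set E := extmx d.+1 0 C.
have det_lead n : (n <= d.+1)%N -> \det (sqmx n E) = \det (sqmx n C).
  move=> le_nd; congr (\det _); apply/matrixP => i j; rewrite !mxE /E /extmx.
  by rewrite (leq_trans (ltn_ord i) le_nd) (leq_trans (ltn_ord j) le_nd).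
have detE k : \det (sqmx (d + k) E) = detXm1 d.+1 C + k%:Z * DeltaX d.+1 C /\
              \det (sqmx (d + k.+1) E) = detXm1 d.+1 C + k.+1%:Z * DeltaX d.+1 C.
  elim: k => [|k [IHk IHk1]].
    by rewrite addn0 addn1 !det_lead // /DeltaX /detX /detXm1 /=; split; ring.
  split=> //; rewrite !addnS det_sqmx_chain_step => [| | | |j|i];
    rewrite /E /extmx; try (case_ifs; lia).
  by rewrite -addnS IHk1 IHk !intS; ring.
by rewrite addSn -addnS (proj1 (detE m.+1)) intS /DeltaX; ring.
Qed.

Lemma ext_seq_inQ d C a x t M :
  is_ext_seq d C a -> \det (sqmx (d + M) (extmx d 0 C)) != 0 ->
  \sum_(i < size x) nth 0 x i * a i.+1 = DeltaX d C * t -> (ellx x <= d + M)%N ->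
  inQ (d + M) (extmx d 0 C)
    (fun q => - DeltaX d C * (xco x q.+1 + t * (q == (d + M).-1)%:R)).
Proof.
move=> ext_a det0 sum_xa le_xn.
apply: eq_inQ (inQ_sum (fun j => xco x j.+1) (ext_a M det0)) => q lt_qn.
set n := (d + M)%N; set D := DeltaX d C.
rewrite (eq_bigr (fun j : 'I_n => - D * xco x j.+1 * (q == j)%:R
                                 - (q == n.-1)%:R * (xco x j.+1 * a j.+1))) => [|j _]; last ring.
rewrite sumrB (sum_ord_delta (fun j => - D * xco x j.+1)) //.
by rewrite -mulr_sumr (@sum_xco x _ (fun i => a i.+1)) // sum_xa; ring.
Qed.

(* [b] gives the coordinates of x + t omegabar^(n - d) in the simple roots of
   X(n - d). *)
Definition root_coords d C x (t : int) n (b : nat -> int) : Prop :=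
  forall q, (q < n)%N ->
    xco x q.+1 + t * (q == n.-1)%:R = \sum_(p < n) extmx d 0 C q p * b p.

Lemma root_coords_exist d C a x t M :
  (0 < d)%N -> extensible d C -> is_ext_seq d C a ->
  \sum_(i < size x) nth 0 x i * a i.+1 = DeltaX d C * t ->
  (ellx x <= d + M)%N -> detX d C + M%:Z * DeltaX d C != 0 ->
  exists b, root_coords d C x t (d + M) b.
Proof.
move=> d_gt0 [_ [Delta0 coX]] ext_a sum_xa le_xn detM0.
have det_eq := det_extmx C M d_gt0.
have [b Hb] : inQ (d + M) (extmx d 0 C) (fun q => xco x q.+1 + t * (q == (d + M).-1)%:R).
  apply: (@inQ_coprime _ _ (- DeltaX d C)); first by rewrite oppr_eq0.
    by rewrite det_eq /coprimez gcdNz -/(coprimez _ _) coprimez_addMr // /coprimez coX.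
  by apply: ext_seq_inQ ext_a _ sum_xa le_xn; rewrite det_eq.
by exists b.
Qed.

Definition extend_const n (b : nat -> int) (t : int) p := if (p < n)%N then b p else t.

Lemma root_coords_succ_sub d C x t n b b' :
  (d <= n)%N -> (0 < n)%N -> (ellx x <= n)%N ->
  root_coords d C x t n b -> root_coords d C x t n.+1 b' ->
  forall q, (q < n.+1)%N ->
    (t - b n.-1) * (q == n)%:R =
    \sum_(p < n.+1) extmx d 0 C q p * (extend_const n b t p - b' p).
Proof.
move=> le_dn n_gt0 le_xn Hb Hb' q lt_qn1.
under eq_bigr => p _ do rewrite mulrBr.
rewrite sumrB -Hb' // -[n.+1.-1]/n.
have [lt_qn|->] : (q < n)%N \/ q = n by lia.
  rewrite big_ord_recr /= (eq_bigr (fun p : 'I_n => extmx d 0 C q p * b p)) => [|p _];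
    last by rewrite /extend_const ltn_ord.
  rewrite /extend_const ltnn -Hb // extmx_chain ?le_dn ?orbT // (ltn_eqF lt_qn).
  rewrite (_ : (n == q.+1) || (q == n.+1) = (q == n.-1)); last by lia.
  by rewrite (gtn_eqF lt_qn); case: (q == n.-1); rewrite /= ?mulr0 ?mulr1; ring.
rewrite sum_extmx_chain_row // ltnn /extend_const ltnn.
rewrite (_ : n.-1 < n)%N ?prednK // eqxx xco_ellx // !mulr1; ring.
Qed.

Lemma root_coords_succ_det d C x t n b b' :
  (d <= n)%N -> (0 < n)%N -> (ellx x <= n)%N ->
  root_coords d C x t n b -> root_coords d C x t n.+1 b' ->
  \det (sqmx n.+1 (extmx d 0 C)) * (t - b' n) =
  \det (sqmx n (extmx d 0 C)) * (t - b n.-1).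
Proof.
move=> le_dn n_gt0 le_xn Hb Hb'.
have := @sqmx_cramer _ _ (fun p => extend_const n b t p - b' p) _
  (root_coords_succ_sub le_dn n_gt0 le_xn Hb Hb') ord_max.
rewrite /= /extend_const ltnn => ->.
rewrite big_ord_recr /= big1 => [|j _]; last by rewrite (ltn_eqF (ltn_ord j)) !mulr0.
by rewrite add0r eqxx mulr1 adj_sqmx_max.
Qed.

Lemma root_coords_second_diff d C x t n b q :
  (0 < d)%N -> (lsg d x <= q < n)%N -> root_coords d C x t n b ->
  extend_const n b t q.-1 + extend_const n b t q.+1 = 2 * extend_const n b t q.
Proof.
move=> d_gt0 /andP[le_lq lt_qn] Hb.
have le_dq : (d <= q)%N by apply: leq_trans (leq_maxr _ _) le_lq.
have := Hb q lt_qn; rewrite xco_ellx ?(leq_trans (leq_maxl _ _) le_lq) //.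
rewrite sum_extmx_chain_row // ?(leq_trans d_gt0) // /extend_const lt_qn.
rewrite (leq_ltn_trans (leq_pred q) lt_qn).
have [lt_q1n|le_nq1] := ltnP q.+1 n.
  by rewrite (_ : q == n.-1 = false) ?mulr0; [lia | lia].
by rewrite (_ : q == n.-1) ?mulr1; [lia | lia].
Qed.

Lemma root_coords_last d C a x t :
  (0 < d)%N -> extensible d C -> is_ext_seq d C a ->
  \sum_(i < size x) nth 0 x i * a i.+1 = DeltaX d C * t ->
  exists n b, [/\ ((lsg d x).+1 < n)%N, root_coords d C x t n b & b n.-1 = t].
Proof.
move=> d_gt0 extC ext_a sum_xa; have [_ [Delta0 _]] := extC.
have le_xl : (ellx x <= lsg d x)%N := leq_maxl _ _.
set M0 := (lsg d x + `|detX d C|).+1.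
have sol j : exists b, root_coords d C x t (d + (M0 + j)) b.
  apply: (root_coords_exist d_gt0 extC ext_a sum_xa); first by rewrite /M0; lia.
  apply/eqP => det0; have small : (`|detX d C| + `|0| < M0 + j)%N by rewrite /M0; lia.
  have := lin_mul_small_eq0 (e := 1) Delta0 small.
  by rewrite det0 mul0r => /(_ erefl)/eqP; rewrite oner_eq0.
(* By [root_coords_succ_det] the integer det X(m) (t - b_last) does not depend
   on m, while |det X(m)| grows linearly in m, so it is 0. *)
have [b0 Hb0] := sol 0%N.
set K := \det (sqmx (d + M0) (extmx d 0 C)) * (t - b0 (d + M0).-1).
have inv j : exists b, root_coords d C x t (d + (M0 + j)) b /\
    \det (sqmx (d + (M0 + j)) (extmx d 0 C)) * (t - b (d + (M0 + j)).-1) = K.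
  elim: j => [|j [b [Hb HK]]]; first by exists b0; rewrite addn0 in Hb0 *.
  have [b' Hb'] := sol j.+1; exists b'; split=> //.
  rewrite (_ : d + (M0 + j.+1) = (d + (M0 + j)).+1)%N in Hb' *; last by lia.
  by rewrite -HK -(root_coords_succ_det _ _ _ Hb Hb') //; rewrite /M0; lia.
have [b [Hb HK]] := inv `|K|%N.
exists (d + (M0 + `|K|))%N, b; split=> //; first by rewrite /M0; lia.
rewrite det_extmx // in HK; apply/eqP; rewrite -subr_eq0; apply/eqP.
by rewrite -[_ - _]opprB (lin_mul_small_eq0 Delta0 _ HK) ?oppr0 //; rewrite /M0; lia.
Qed.

(* Row q of the Cartan matrix of X(oo) vanishes beyond max(d, q + 2), so
   every large enough [n] computes its product with [f]. *)
Definition chain_coords d C x (t : int) (f : nat -> int) : Prop :=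
  (forall p, ((lsg d x).-1 <= p)%N -> f p = t) /\
  forall q n, (d <= n)%N -> (q.+1 < n)%N ->
    xco x q.+1 = \sum_(p < n) extmx d 0 C q p * f p.

Lemma chain_coords_extend d C x t n b : (0 < d)%N -> ((lsg d x).+1 < n)%N ->
  root_coords d C x t n b -> b n.-1 = t -> chain_coords d C x t (extend_const n b t).
Proof.
move=> d_gt0 lt_ln Hb b_last.
have le_dl : (d <= lsg d x)%N := leq_maxr _ _.
have le_xl : (ellx x <= lsg d x)%N := leq_maxl _ _.
have tail p : ((lsg d x).-1 <= p)%N -> extend_const n b t p = t.
  move=> le_p; have [lt_np|le_pn] := ltnP n p; first by rewrite /extend_const ltnNge ltnW.
  apply: (@second_diff_const _ (lsg d x) n.-1); first by lia.
  - by move=> q range_q; apply: root_coords_second_diff Hb; lia.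
  - by rewrite /extend_const prednK ?leqnn ?b_last //; lia.
  - by rewrite prednK /extend_const ?ltnn //; lia.
  - by lia.
split=> // q m le_dm lt_q1m.
have [lt_ql|le_lq] := ltnP q (lsg d x).
  have := Hb q ltac:(lia); rewrite (_ : q == n.-1 = false) ?mulr0 ?addr0; last by lia.
  move=> ->; rewrite !sum_extmx_row_trunc //; try lia.
  by apply: eq_big_nat => p range_p; rewrite /extend_const (_ : p < n)%N //; lia.
rewrite xco_ellx; last by lia.
by rewrite sum_extmx_chain_row ?lt_q1m ?tail //; lia.
Qed.

Lemma exists_chain_coords d C a x t :
  (0 < d)%N -> extensible d C -> is_ext_seq d C a ->
  \sum_(i < size x) nth 0 x i * a i.+1 = DeltaX d C * t ->
  exists f, chain_coords d C x t f.
Proof.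
move=> d_gt0 extC ext_a sum_xa.
have [n [b [lt_ln Hb b_last]]] := root_coords_last d_gt0 extC ext_a sum_xa.
by exists (extend_const n b t); apply: chain_coords_extend.
Qed.

Lemma Zmx_left d1 d2 k C1 C2 q p : (q < d1 + k)%N -> (p <= d1 + k)%N ->
  Zmx d1 d2 k C1 C2 q p = extmx d1 0 C1 q p.
Proof. by rewrite /Zmx /extmx; case_ifs; lia. Qed.

Lemma Zmx_far d1 d2 k C1 C2 q p : (q.+1 < p)%N -> (d1 < p)%N -> (q < d1 + k)%N ->
  Zmx d1 d2 k C1 C2 q p = 0.
Proof. by rewrite /Zmx; case_ifs; lia. Qed.

Lemma Zmx_rev d1 d2 k C1 C2 q p : (q < d1 + k + d2)%N -> (p < d1 + k + d2)%N ->
  Zmx d1 d2 k C1 C2 ((d1 + k + d2).-1 - q) ((d1 + k + d2).-1 - p) = Zmx d2 d1 k C2 C1 q p.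
Proof.
move=> lt_q lt_p; rewrite /Zmx; case_ifs; try lia.
- by congr C1; lia.
- by congr C2; lia.
Qed.

Definition Zcoef (l r : nat) (b c : nat -> int) (s : int) (N p : nat) : int :=
  if (p.+1 <= l.-1)%N then b p.+1 else if (N - p <= r.-1)%N then c (N - p)%N else s.

Lemma Zcoef_rev l r b c s N p : (l + r <= N)%N -> (p < N)%N ->
  Zcoef l r b c s N (N.-1 - p) = Zcoef r l c b s N p.
Proof.
move=> le_lrN lt_pN; rewrite /Zcoef (_ : N - (N.-1 - p) = p.+1)%N; last by lia.
by rewrite (_ : (N.-1 - p).+1 = N - p)%N; [case_ifs | ]; lia.
Qed.

Lemma gammak_rev d1 d2 k x y q : (q < d1 + k + d2)%N ->
  gammak d1 d2 k x y ((d1 + k + d2).-1 - q) = gammak d2 d1 k y x q.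
Proof.
move=> lt_q; rewrite /gammak addrC; congr (xco _ _ + xco _ _); lia.
Qed.

Lemma sum_Zmx_rev d1 d2 k C1 C2 l r b c s q :
  (l + r <= d1 + k + d2)%N -> (q < d1 + k + d2)%N ->
  \sum_(p < d1 + k + d2)
     Zmx d1 d2 k C1 C2 ((d1 + k + d2).-1 - q) p * Zcoef l r b c s (d1 + k + d2) p =
  \sum_(p < d2 + k + d1) Zmx d2 d1 k C2 C1 q p * Zcoef r l c b s (d2 + k + d1) p.
Proof.
move=> le_lrN lt_q; rewrite (_ : d2 + k + d1 = d1 + k + d2)%N; last by lia.
rewrite (reindex_inj rev_ord_inj) /=; apply: eq_bigr => p _.
by rewrite (_ : d1 + k + d2 - p.+1 = (d1 + k + d2).-1 - p)%N ?Zmx_rev ?Zcoef_rev //; lia.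
Qed.

Lemma gammak_Zcoef_left d1 d2 k C1 C2 x y t f c l r q :
  (0 < d2)%N -> chain_coords d1 C1 x t f -> (lsg d1 x <= l)%N ->
  (d2 <= r)%N -> (ellx y <= r)%N -> (l + r <= d1 + k + d2)%N -> (q < d1 + k + d2 - r)%N ->
  gammak d1 d2 k x y q =
  \sum_(p < d1 + k + d2)
     Zmx d1 d2 k C1 C2 q p * Zcoef l r (fun i => f i.-1) c t (d1 + k + d2) p.
Proof.
move=> d2_gt0 [tail Ef] le_xl le_d2r le_yr le_lrN lt_q.
have le_d1l : (d1 <= l)%N := leq_trans (leq_maxr _ _) le_xl.
set N := (d1 + k + d2)%N in le_lrN lt_q *.
have Zcoef_f p : (p <= N - r)%N -> Zcoef l r (fun i => f i.-1) c t N p = f p.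
  move=> le_p; rewrite /Zcoef; case: ifP => // /negbT gt_p.
  by rewrite ifN ?tail //; lia.
rewrite /gammak -/N (_ : N - q = (N - q).-1.+1)%N; last by lia.
rewrite [xco y _]xco_ellx ?addr0; last by lia.
rewrite (Ef q (N - r).+1); [|lia|lia].
rewrite (@big_ord_interval _ _ 0 (N - r).+1
  (fun p => Zmx d1 d2 k C1 C2 q p * Zcoef l r (fun i => f i.-1) c t N p)); last 2 first.
- by lia.
- by move=> p _ out_p; rewrite Zmx_far ?mul0r //; lia.
rewrite big_mkord; apply: eq_bigr => p _; have lt_p := ltn_ord p.
by rewrite Zmx_left ?Zcoef_f //; lia.
Qed.

Theorem proposition4p8
  (d1 d2 : nat) (C1 C2 : nat -> nat -> int) (a1 a2 : nat -> int)
  (x y : seq int) :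
  (0 < d1)%N -> (0 < d2)%N ->
  is_GCM d1 C1 -> symmetrizable d1 C1 ->
  is_GCM d2 C2 -> symmetrizable d2 C2 ->
  extensible d1 C1 -> extensible d2 C2 ->
  gcdz (DeltaX d1 C1) (DeltaX d2 C2) = 1 ->
  is_ext_seq d1 C1 a1 -> is_ext_seq d2 C2 a2 ->
  boxes (DeltaX d1 C1) (DeltaX d2 C2) a1 a2 x y = 0 ->
  let l := lsg d1 x in
  let r := rsg d2 y in
  exists (b c : nat -> int) (s : int),
    forall k : nat, (l + r - d1 - d2 <= k)%N ->
      let N := (d1 + k + d2)%N in
      forall q, (q < N)%N ->
        gammak d1 d2 k x y q =
        \sum_(p < N)
          Zmx d1 d2 k C1 C2 q p *
          (if (p.+1 <= l.-1)%N then b p.+1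
           else if (N - p <= r.-1)%N then c (N - p)%N
           else s).
Proof.
(* Only determinants enter. *)
move=> d1_gt0 d2_gt0 _ _ _ _ ext1 ext2 coD ext_a1 ext_a2 boxes0 l r.
have co_Delta : coprimez (DeltaX d1 C1) (DeltaX d2 C2) by rewrite /coprimez coD.
have [_ [Delta1_0 _]] := ext1.
have [t [sum1 sum2]] := coprimez_cross co_Delta Delta1_0 (subr0_eq boxes0).
have [f1 chain1] := exists_chain_coords d1_gt0 ext1 ext_a1 sum1.
have [f2 chain2] := exists_chain_coords d2_gt0 ext2 ext_a2 sum2.
exists (fun i => f1 i.-1), (fun i => f2 i.-1), t => k le_k N q lt_qN.
have [le_d1l le_xl] : (d1 <= l)%N /\ (ellx x <= l)%N by rewrite leq_maxr leq_maxl.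
have [le_d2r le_yr] : (d2 <= r)%N /\ (ellx y <= r)%N by rewrite leq_maxr leq_maxl.
have le_lrN : (l + r <= N)%N by rewrite /N; lia.
change (gammak d1 d2 k x y q = \sum_(p < N)
  Zmx d1 d2 k C1 C2 q p * Zcoef l r (fun i => f1 i.-1) (fun i => f2 i.-1) t N p).
have [lt_q|ge_q] := ltnP q (N - r).
  by apply: gammak_Zcoef_left.
(* The remaining rows are the first ones of the mirrored diagram Z_k(X_2, X_1). *)
rewrite /N in lt_qN le_lrN ge_q *.
rewrite (_ : q = (d1 + k + d2).-1 - ((d1 + k + d2).-1 - q))%N; last by lia.
rewrite gammak_rev ?sum_Zmx_rev //; try lia.
by apply: gammak_Zcoef_left => //; lia.
Qed.
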